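(* Let $X$ be a Banach space and let $u=\sum_{\alpha\in\mathcal{J}}u_\alpha\xi_\alpha$ belong either to $L_{2,Q}(\mathbb{W};X)$ for some sequence $Q$ of positive numbers, or to $\bigcup_{\gamma\ge0}(\mathcal{S})_{-\rho,-\gamma}(X)$ for some $0\le\rho\le1$. Then for every $\alpha\in\mathcal{J}$, $$u_\alpha=\frac{1}{\sqrt{\alpha!}}\left.\Big(\prod_{i,k}\frac{\partial^{\alpha_i^k}}{\partial h_{k,i}^{\alpha_i^k}}\Big)Su(h)\right|_{h=0}.$$
   Context: $\mathcal{J}$: multi-indices $\alpha=(\alpha_i^k)_{i,k\ge1}$ of nonnegative integers with finitely many nonzero entries; $\alpha!=\prod\alpha_i^k!$; $\{\xi_\alpha\}$ the Cameron–Martin basis (built from independent Wiener processes $w_k$ and an orthonormal basis $\{m_i\}$ of $L_2((0,T))$). For $Q=\{q_k\}$ positive, $q^\alpha=\prod q_k^{\alpha_i^k}$ and $L_{2,Q}(\mathbb{W};X)$ is the set of formal series $\sum u_\alpha\xi_\alpha$, $u_\alpha\in X$, with $\sum q^{2\alpha}\|u_\alpha\|_X^2<\infty$; $(\mathcal{S})_{-\rho,-\gamma}(X)$ is the set with $\sum_\alpha(\alpha!)^{-\rho}\prod_{i,k}(2ik)^{-\gamma\alpha_i^k}\|u_\alpha\|_X^2<\infty$. For $h=\sum_{i,k}h_{k,i}m_iy_k$ with finitely many nonzero real $h_{k,i}$, set $h^\alpha=\prod h_{k,i}^{\alpha_i^k}$; the S-transform is $Su(h)=\sum_\alpha u_\alpha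 h^\alpha/\sqrt{\alpha!}\in X$ (defined wherever the series converges), viewed as a function of the variables $h_{k,i}$. *)

From HB Require Import structures.
From mathcomp Require Import all_boot all_order all_algebra finmap.
From mathcomp Require Import all_classical all_reals all_analysis.
Set Implicit Arguments. Unset Strict Implicit. Unset Printing Implicit Defensive.
Import Order.TTheory GRing.Theory Num.Theory.
Import numFieldNormedType.Exports.
Local Open Scope classical_set_scope.
Local Open Scope ring_scope.

(* The pair (i,k) : nat * nat encodes the paper's indices (i+1, k+1)
   (i indexes the basis m_i of L_2((0,T)), k indexes the Wiener process w_k). *)
Definition mindex := {fsfun nat * nat -> nat with 0%N}.

Definition mfact (a : mindex) : nat := (\prod_(p <- finsupp a) (a p)`!)%N.

Definition qpow {R : realType} (q : nat -> R) (a : mindex) : R :=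
  \prod_(p <- finsupp a) q p.2 ^+ a p.

(* h^alpha = prod_{i,k} h_{k,i}^{alpha_i^k}; the variable h_{k,i} is h (i,k). *)
Definition hpow {R : realType} (h : nat * nat -> R) (a : mindex) : R :=
  \prod_(p <- finsupp a) h p ^+ a p.

Definition Sweight {R : realType} (gamma : R) (a : mindex) : R :=
  \prod_(p <- finsupp a)
     (((2 * p.1.+1 * p.2.+1)%:R : R) `^ (- gamma)) ^+ a p.

Definition in_L2Q {R : realType} {X : normedModType R}
  (q : nat -> R) (u : mindex -> X) : Prop :=
  (\esum_(a in [set: mindex]) ((qpow q a) ^+ 2 * `|u a| ^+ 2)%:E < +oo)%E.

Definition in_S {R : realType} {X : normedModType R}
  (rho gamma : R) (u : mindex -> X) : Prop :=
  (\esum_(a in [set: mindex])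
     (((mfact a)%:R : R) `^ (- rho) * Sweight gamma a * `|u a| ^+ 2)%:E < +oo)%E.

(* Unconditional summation of a family indexed by a choiceType: limit of the
   finite partial sums along the filter of finite subsets ordered by inclusion. *)
Definition totally {I : choiceType} : set_system {fset I} :=
  filter_from setT (fun A => [set B | (A `<=` B)%fset]).

Definition partial_sum {I : choiceType} {V : zmodType}
  (x : I -> V) (A : {fset I}) : V := \sum_(i : A) x (val i).

Definition fam_sum {R : realType} {V : normedModType R} {I : choiceType}
  (x : I -> V) : V := lim (partial_sum x @ totally).

Definition Strans {R : realType} {X : normedModType R}
  (u : mindex -> X) (h : nat * nat -> R) : X :=
  fam_sum (fun a : mindex =>
    (hpow h a / Num.sqrt ((mfact a)%:R)) *: u a).

Definition dpartial {R : realType} {X : normedModType R} (p : nat * nat)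
  (F : (nat * nat -> R) -> X) : (nat * nat -> R) -> X :=
  fun h => derive1 (fun t : R => F (fun r => h r + (if r == p then t else 0))) 0.

Definition Dalpha {R : realType} {X : normedModType R} (a : mindex)
  (F : (nat * nat -> R) -> X) : (nat * nat -> R) -> X :=
  foldr (fun p G => iter (a p) (dpartial p) G) F (finsupp a).

(* Only the variables h_p with p in S := supp alpha matter, so h is taken
   supported in S.  Either hypothesis yields r > 0 with
   sum_b r^|b| |u_b| / sqrt(b!) < oo (AM-GM against the weight, the rest being a
   geometric series), so the termwise derivatives
   T_k(h) = sum_b (d^k h^b) / sqrt(b!) u_b converge uniformly near h = 0.  A
   quadratic Taylor bound on each monomial then gives d_p T_k = T_(k + e_p)
   there, hence D^alpha Su(0) = T_alpha(0), where only the term b = alpha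
   survives, with value alpha! / sqrt(alpha!) u_alpha. *)

From HB Require Import structures.
From mathcomp Require Import all_boot all_order all_algebra finmap.
From mathcomp Require Import all_classical all_reals all_analysis.
From mathcomp Require Import ring lra zify.
Import Order.TTheory GRing.Theory Num.Theory.
Import numFieldNormedType.Exports.

Set Implicit Arguments.
Unset Strict Implicit.
Unset Printing Implicit Defensive.
Local Open Scope ring_scope.

Lemma bin_le_exp2 n k : ('C(n, k) <= 2 ^ n)%N.
Proof.
elim: n k => [|n IH] [|k] //; first by rewrite bin0 expn_gt0.
by rewrite binS expnS mul2n -addnn leq_add.
Qed.

Lemma ffact_le_fact_exp2 n k : (n ^_ k <= k`! * 2 ^ n)%N.
Proof. by rewrite -bin_ffact mulnC leq_mul2l bin_le_exp2 orbT. Qed.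

Lemma sqr_le_exp4 m : (m ^ 2 <= 4 ^ m)%N.
Proof.
have m_le : (m <= 2 ^ m)%N by apply: ltnW; rewrite ltn_expl.
by rewrite (_ : 4 = 2 ^ 2)%N // -expnM mulnC expnM leq_exp2r.
Qed.

Section MonomialDerivatives.
Variable R : realFieldType.

Definition monomial_derivn (k n : nat) (x : R) : R := (n ^_ k)%:R * x ^+ (n - k).

Lemma monomial_derivn_bound (r : R) k n x : 0 < r -> `|x| <= r / 2 ->
  `|monomial_derivn k n x| <= k`!%:R * (2 / r) ^+ k * r ^+ n.
Proof.
move=> r0 hx; rewrite /monomial_derivn normrM normr_nat normrX.
have r2 : 0 <= 2 / r by rewrite divr_ge0 // ltW.
have [kn|nk] := leqP k n; last first.
  by rewrite ffact_small // mul0r !mulr_ge0 ?exprn_ge0 // ltW.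
have xk : `|x| ^+ (n - k) <= (r / 2) ^+ (n - k).
  by apply: lerXn2r; rewrite // nnegrE; lra.
have split_pow : (r / 2) ^+ (n - k) = (r / 2) ^+ n * (2 / r) ^+ k.
  rewrite -{2}(subnK kn) exprD -mulrA -exprMn.
  have -> : r / 2 * (2 / r) = 1 by field; rewrite gt_eqF.
  by rewrite expr1n mulr1.
have ffact_le : (n ^_ k)%:R <= k`!%:R * 2 ^+ n :> R.
  by rewrite -natrX -natrM ler_nat ffact_le_fact_exp2.
apply: (le_trans (ler_wpM2l (ler0n _ _) xk)); rewrite split_pow mulrA.
have rh : 0 <= r / 2 by lra.
apply: le_trans (ler_wpM2r (exprn_ge0 _ r2)
  (ler_wpM2r (exprn_ge0 _ rh) ffact_le)) _.
have n2 : (2 : R) ^+ n != 0 by rewrite expf_neq0 // pnatr_eq0.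
by rewrite expr_div_n le_eqVlt; apply/orP; left; apply/eqP; field.
Qed.

(* Stated with both sides multiplied by [c ^+ 2] so that the induction on [m]
   involves no division. *)
Lemma expr_taylor2_bound m (x s c : R) : 0 <= c -> `|x| <= c -> `|s| <= c ->
  c ^+ 2 * `|(x + s) ^+ m - x ^+ m - s * m%:R * x ^+ m.-1|
    <= s ^+ 2 * (m ^ 2)%:R * (2 * c) ^+ m.
Proof.
move=> c0 hx hs; have s2 : 0 <= s ^+ 2 := sqr_ge0 s.
elim: m => [|m IH].
  by rewrite !expr0 subrr sub0r mulr0 normrN mul0r normr0 mulr0 mulr1 mulr0.
have rec : (x + s) ^+ m.+1 - x ^+ m.+1 - s * m.+1%:R * x ^+ m =
   (x + s) * ((x + s) ^+ m - x ^+ m - s * m%:R * x ^+ m.-1)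
   + s ^+ 2 * m%:R * x ^+ m.-1.
  by case: m {IH} => [|m]; rewrite /= ?expr0 ?expr1 ?exprS; ring.
rewrite rec /=; set E := (_ - _ - _ : R) in IH *.
have hxs : `|x + s| <= 2 * c by rewrite (le_trans (ler_normD _ _)) //; lra.
have c2m : 0 <= (2 * c) ^+ m by rewrite exprn_ge0 // mulr_ge0.
have first_term : c ^+ 2 * (`|x + s| * `|E|)
    <= 2 * c * (s ^+ 2 * (m ^ 2)%:R * (2 * c) ^+ m).
  rewrite mulrCA; apply: (le_trans (ler_wpM2l (normr_ge0 (x + s)) IH)).
  by apply: ler_wpM2r => //; apply: mulr_ge0 => //; apply: mulr_ge0.
have xm : m%:R * (`|x| ^+ m.-1 * c ^+ 2) <= m%:R * (2 * c) ^+ m.+1.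
  case: m {rec E IH first_term c2m} => [|m] /=; first by rewrite !mul0r.
  apply: ler_wpM2l => //.
  have xc : `|x| ^+ m <= c ^+ m by apply: lerXn2r; rewrite // nnegrE.
  have -> : (2 * c) ^+ m.+2 = 2 ^+ m.+2 * (c ^+ m * c ^+ 2).
    by rewrite exprMn -exprD addn2.
  apply: (le_trans (ler_wpM2r (exprn_ge0 _ c0) xc)).
  by rewrite -[X in X <= _]mul1r ler_wpM2r ?mulr_ge0 ?exprn_ge0 ?exprn_ege1 ?ler1n.
have second_term : c ^+ 2 * `|s ^+ 2 * m%:R * x ^+ m.-1|
    <= s ^+ 2 * m%:R * (2 * c) ^+ m.+1.
  rewrite normrM [X in _ * (X * _) <= _]normrM normr_nat (ger0_norm s2) normrX.
  rewrite -mulrA; apply: le_trans (ler_wpM2l s2 xm).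
  by rewrite le_eqVlt; apply/orP; left; apply/eqP; ring.
apply: (le_trans (ler_wpM2l (exprn_ge0 _ c0) (ler_normD _ _))).
rewrite mulrDr normrM; apply: (le_trans (lerD first_term second_term)).
have hm : 0 <= (m.+1 ^ 2)%:R - ((m ^ 2)%:R + m%:R) :> R.
  by rewrite subr_ge0 -natrD ler_nat -[m.+1]addn1 sqrnD exp1n muln1 -addnA leq_add2l
    addnC -addnA leq_addr.
rewrite [(2 * c) ^+ m.+1]exprS -subr_ge0.
apply: le_trans (mulr_ge0 (mulr_ge0 s2 (mulr_ge0 (mulr_ge0 (ler0n _ 2) c0) c2m)) hm) _.
by rewrite le_eqVlt; apply/orP; left; apply/eqP; ring.
Qed.

Lemma monomial_derivn_taylor2 (r : R) k n x s : 0 < r ->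
  `|x| <= r / 16 -> `|s| <= r / 16 ->
  `|monomial_derivn k n (x + s) - monomial_derivn k n x
      - s * monomial_derivn k.+1 n x|
    <= s ^+ 2 * (16 / r) ^+ 2 * (k`!%:R * (2 / r) ^+ k * r ^+ n).
Proof.
move=> r0 hx hs; set m := (n - k)%N.
set E := (x + s) ^+ m - x ^+ m - s * m%:R * x ^+ m.-1.
have -> : monomial_derivn k n (x + s) - monomial_derivn k n x
    - s * monomial_derivn k.+1 n x = (n ^_ k)%:R * E.
  by rewrite /monomial_derivn /E ffactnSr natrM subnS -/m; ring.
have r16_ge0 : 0 <= r / 16 by lra.
have E_le_scaled := expr_taylor2_bound m r16_ge0 hx hs.
have m4 : (m ^ 2)%:R * (2 * (r / 16)) ^+ m <= (r / 2) ^+ m :> R.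
  have -> : r / 2 = 4 * (2 * (r / 16)) by field.
  rewrite [(4 * _) ^+ m]exprMn; apply: ler_wpM2r; first by rewrite exprn_ge0 //; lra.
  by rewrite -natrX ler_nat sqr_le_exp4.
have s2 : 0 <= s ^+ 2 := sqr_ge0 s.
have c_ge0 : 0 <= (16 / r) ^+ 2 by rewrite exprn_ge0 // divr_ge0 // ltW.
have E_le : `|E| <= s ^+ 2 * (16 / r) ^+ 2 * (r / 2) ^+ m.
  have -> : `|E| = (16 / r) ^+ 2 * ((r / 16) ^+ 2 * `|E|) by field; rewrite gt_eqF.
  have -> : s ^+ 2 * (16 / r) ^+ 2 * (r / 2) ^+ m
      = (16 / r) ^+ 2 * (s ^+ 2 * (r / 2) ^+ m) by ring.
  apply: ler_wpM2l => //; apply: (le_trans E_le_scaled).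
  by rewrite -mulrA ler_wpM2l.
have ffact_le : (n ^_ k)%:R * (r / 2) ^+ m <= k`!%:R * (2 / r) ^+ k * r ^+ n.
  have r2 : `|r / 2| <= r / 2 by rewrite ger0_norm //; lra.
  apply: le_trans (monomial_derivn_bound k n r0 r2); rewrite ger0_norm //.
  by rewrite mulr_ge0 ?ler0n // exprn_ge0 //; lra.
rewrite normrM normr_nat; apply: (le_trans (ler_wpM2l (ler0n _ _) E_le)).
by rewrite mulrCA ler_wpM2l // mulr_ge0.
Qed.

End MonomialDerivatives.

Lemma derive1_quadratic_remainder (R : realType) (X : normedModType R)
    (f : R -> X) (L : X) (d K : R) : 0 < d ->
  (forall t, t != 0 -> `|t| < d -> `|f t - f 0 - t *: L| <= t ^+ 2 * K) ->
  derive1 f 0 = L.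
Proof.
move=> d0 est; apply: cvg_lim; first exact: norm_hausdorff.
apply/cvgrPdist_le => eps eps0.
have K1 : 0 < `|K| + 1 by rewrite ltr_wpDl.
near=> t.
have t0 : t != 0 by near: t; exact: nbhs_dnbhs_neq.
have td : `|t| < Num.min d (eps / (`|K| + 1)).
  by near: t; apply: dnbhs0_lt; rewrite lt_min d0 divr_gt0.
move: td; rewrite lt_min => /andP[td te].
have -> : L - t^-1 *: (f (t + 0) - f 0) = - (t^-1 *: (f t - f 0 - t *: L)).
  by rewrite addr0 [in RHS]scalerBr scalerA mulVf // scale1r opprB.
have tp : 0 < `|t| by rewrite normr_gt0.
rewrite normrN normrZ normfV ler_pdivrMl //.
apply: le_trans (est t t0 td) _.
have tK : t ^+ 2 * K <= `|t| * (`|t| * (`|K| + 1)).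
  rewrite mulrA -expr2 -normrX ger0_norm ?sqr_ge0 // ler_wpM2l ?sqr_ge0 //.
  by rewrite (le_trans (ler_norm K)) // lerDl.
apply: le_trans tK _; rewrite ler_wpM2l ?ltW //.
by move: te; rewrite ltr_pdivlMr // => /ltW.
Unshelve. all: by end_near.
Qed.

Instance totally_filter (I : choiceType) : ProperFilter (@totally I).
Proof.
eapply filter_from_proper; last by move=> A _; exists A; rewrite /= fsubset_refl.
apply: filter_fromT_filter; first by exists fset0.
by move=> A B /=; exists (A `|` B)%fset => P /=; rewrite fsubUset => /andP[].
Qed.

Section UnconditionalSums.
Variables (R : realType) (I : choiceType).
Local Open Scope classical_set_scope.

Lemma partial_sumE (V : zmodType) (x : I -> V) A :
  partial_sum x A = \sum_(i <- A) x i.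
Proof. by rewrite /partial_sum big_seq_fsetE. Qed.

Definition sums_le (f : I -> R) (M : R) := forall A : {fset I}, \sum_(i <- A) f i <= M.

Lemma sums_leZ (c : R) (f : I -> R) M :
  0 <= c -> sums_le f M -> sums_le (fun i => c * f i) (c * M).
Proof. by move=> c0 fM A; rewrite -mulr_sumr ler_wpM2l. Qed.

Lemma esum_lt_pinfty_sums_le (f : I -> R) : (forall i, 0 <= f i) ->
  (\esum_(i in [set: I]) (f i)%:E < +oo)%E -> exists M, sums_le f M.
Proof.
move=> f0 hlt; set s := (\esum_(i in _) _)%E in hlt.
have s0 : (0 <= s)%E by apply: esum_ge0 => i _; rewrite lee_fin.
have fin_s : s \is a fin_num by rewrite ge0_fin_numE.
exists (fine s) => A; rewrite -lee_fin fineK //; apply: esum_ge.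
exists [set` A]; first by split => //; exact: finite_fset.
by rewrite fsbig_finite ?finite_fset // set_fsetK sumEFin.
Qed.

Lemma big_fset_split (V : zmodType) (x : I -> V) (A B : {fset I}) : (A `<=` B)%fset ->
  \sum_(i <- B) x i = \sum_(i <- A) x i + \sum_(i <- [fset j in B | j \notin A]%fset) x i.
Proof.
move=> AB; rewrite (big_fsetID _ (mem A)); congr (_ + _).
apply: eq_fbigl => i; rewrite !inE /=; apply/andP/idP => [[]//|iA]; split=> //.
exact: (fsubsetP AB).
Qed.

(* Cauchy criterion: the tails of the dominating sums are controlled by the
   supremum of all finite sums. *)
Lemma partial_sum_cvg_dominated (X : completeNormedModType R) (x : I -> X)
    (f : I -> R) M :
  (forall i, `|x i| <= f i) -> sums_le f M -> cvg (partial_sum x @ totally).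
Proof.
move=> xf fM; pose E := [set y | exists A : {fset I}, y = \sum_(i <- A) f i].
have supE : has_sup E.
  split; first by exists 0, fset0; rewrite big_seq_fset0.
  by exists M => y [A ->]; exact: fM.
apply/cauchy_cvgP/cauchy_exP => e e0.
have [_ [A0 ->] A0_sup] := sup_adherent (e0 : 0 < e) supE.
exists (partial_sum x A0); exists A0 => // B /= A0B.
rewrite -ball_normE /= !partial_sumE (big_fset_split x A0B).
rewrite opprD addrA subrr add0r normrN (le_lt_trans (ler_norm_sum _ _ _)) //.
apply: le_lt_trans (ler_sum _ (fun i _ => xf i)) _.
have : \sum_(i <- B) f i <= sup E by apply: sup_upper_bound => //; exists B.
by rewrite (big_fset_split f A0B); lra.
Qed.

Lemma norm_partial_sum_lim_le (X : normedModType R) (x : I -> X) (f : I -> R) M l :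
  (forall i, `|x i| <= f i) -> sums_le f M ->
  partial_sum x @ totally --> l -> `|l| <= M.
Proof.
move=> xf fM /cvg_norm /cvgr_to_le; apply; apply: nearW => A /=.
rewrite partial_sumE (le_trans (ler_norm_sum _ _ _)) //.
exact: le_trans (ler_sum _ (fun i _ => xf i)) (fM A).
Qed.

Lemma partial_sumB (V : zmodType) (x y : I -> V) :
  partial_sum (fun i => x i - y i) = partial_sum x \- partial_sum y.
Proof. by apply/funext => A; rewrite /= !partial_sumE sumrB. Qed.

Lemma partial_sumZ (V : lmodType R) (c : R) (x : I -> V) :
  partial_sum (fun i => c *: x i) = (fun A => c *: partial_sum x A).
Proof. by apply/funext => A; rewrite !partial_sumE scaler_sumr. Qed.

Lemma partial_sum_cvg1 (X : normedModType R) (x : I -> X) (a : I) :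
  (forall i, i != a -> x i = 0) -> partial_sum x @ totally --> x a.
Proof.
move=> xa; apply: cvg_near_cst; exists [fset a]%fset => // B /= aB.
rewrite partial_sumE (big_fsetD1 _ (fsubsetP aB a (fset11 a))) /= big1_fset ?addr0 //.
by move=> i; rewrite !inE => /andP[ia _] _; apply: xa.
Qed.

End UnconditionalSums.

Definition supported_in (S : seq (nat * nat)) (b : mindex) : bool :=
  all (fun p => p \in S) (finsupp b).

Lemma mfact_gt0 b : (0 < mfact b)%N.
Proof. by rewrite /mfact prodn_gt0 // => q; rewrite fact_gt0. Qed.

Lemma big_prod_supported_in (R : comRingType) (S : seq (nat * nat)) (b : mindex)
    (F : nat * nat -> R) : uniq S -> supported_in S b ->
  (forall q, q \notin finsupp b -> F q = 1) ->
  \prod_(q <- S) F q = \prod_(q <- finsupp b) F q.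
Proof.
move=> S_uniq /allP bS F1.
rewrite (bigID (mem (finsupp b))) /= [X in _ * X]big1 ?mulr1; last by move=> q /F1.
rewrite -big_filter; apply/perm_big/uniq_perm; rewrite ?filter_uniq ?fset_uniq //.
by move=> q; rewrite mem_filter andb_idr //; apply: bS.
Qed.

Lemma geometric_sum_le2 (R : realFieldType) N : \sum_(j < N) (2^-1 : R) ^+ j <= 2.
Proof.
have -> : \sum_(j < N) (2^-1 : R) ^+ j = 2 - 2 * (2^-1) ^+ N.
  elim: N => [|N IH]; first by rewrite big_ord0 expr0; lra.
  by rewrite big_ord_recr /= IH exprS; field.
have : 0 <= (2^-1 : R) ^+ N by rewrite exprn_ge0 // invr_ge0.
lra.
Qed.

(* The multi-indices supported in [S] embed into the finite functions
   ['I_(size S) -> 'I_N.+1] for [N] large, over which the sum factorises. *)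
Lemma sum_supported_in_geometric (R : realFieldType) (S : seq (nat * nat))
    (A : {fset mindex}) : uniq S ->
  \sum_(b <- A | supported_in S b) \prod_(p <- S) (2^-1 : R) ^+ b p <= 2 ^+ size S.
Proof.
move=> S_uniq; set n := size S; set N := (\sum_(b <- A) \sum_(p <- S) b p)%N.
have b_small b p : b \in A -> p \in S -> (b p < N.+1)%N.
  move=> bA pS; rewrite ltnS; apply: leq_trans (_ : \sum_(p <- S) b p <= N)%N.
    by rewrite (bigD1_seq p) //= leq_addr.
  by rewrite /N (bigD1_seq b) ?fset_uniq //= leq_addr.
pose code (b : mindex) : {ffun 'I_n -> 'I_N.+1} :=
  [ffun i : 'I_n => inord (b (nth (0, 0)%N S i))].
pose G (f : {ffun 'I_n -> 'I_N.+1}) : R := \prod_(i : 'I_n) (2^-1 : R) ^+ f i.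
have G_ge0 f : 0 <= G f by apply: prodr_ge0 => i _; rewrite exprn_ge0 // invr_ge0.
have code_inj : {in [seq b <- A | supported_in S b] &, injective code}.
  move=> b b'; rewrite !mem_filter => /andP[/allP b_supp bA] /andP[/allP b'_supp b'A] e.
  apply/fsfunP => p; have [pS|pS] := boolP (p \in S).
    have := congr1 (fun f : {ffun 'I_n -> 'I_N.+1} =>
      f (Ordinal (etrans (index_mem p S) pS)) : nat) e.
    by rewrite /= !ffunE /= nth_index // !inordK // b_small.
  have out (c : mindex) : {in finsupp c, forall q, q \in S} -> c p = 0%N.
    by move=> hc; apply/eqP; rewrite -memNfinsupp; apply: contra pS => /hc.
  by rewrite !out.
rewrite -big_filter (eq_big_seq (G \o code)); last first.
  move=> b; rewrite mem_filter => /andP[_ bA] /=.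
  rewrite (big_nth (0, 0)%N) big_mkord; apply: eq_bigr => i _.
  by rewrite ffunE inordK // b_small // mem_nth.
rewrite -(big_map code predT G) big_uniq; last first.
  by rewrite map_inj_in_uniq // filter_uniq // fset_uniq.
apply: (@le_trans _ _ (\sum_(f : {ffun 'I_n -> 'I_N.+1}) G f)).
  rewrite [X in _ <= X](bigID (fun f => f \in map code [seq b <- A | supported_in S b])).
  by rewrite /= lerDl sumr_ge0.
rewrite /G -(bigA_distr_bigA (fun (i : 'I_n) (j : 'I_N.+1) => (2^-1 : R) ^+ j)).
rewrite -[in X in _ <= X](card_ord n) -prodr_const.
apply: ler_prod => i _; rewrite sumr_ge0 => [|j _]; last by rewrite exprn_ge0 // invr_ge0.
exact: geometric_sum_le2.
Qed.

Section FormalDerivatives.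
Variables (R : realType) (X : completeNormedModType R) (u : mindex -> X).
Variable S : seq (nat * nat).
Hypothesis S_uniq : uniq S.
Variable r : R.
Hypothesis r_gt0 : 0 < r.
Local Open Scope classical_set_scope.

Definition majorant (b : mindex) : R :=
  if supported_in S b then (\prod_(q <- S) r ^+ b q) * `|u b| / Num.sqrt (mfact b)%:R
  else 0.

(* [dcoef k h b] is the coefficient of [u b] in the formal derivative of
   order [k] of [Su] at [h], where only the variables in [S] are active. *)
Definition dcoef (k : nat * nat -> nat) (h : nat * nat -> R) (b : mindex) : R :=
  if supported_in S b then
    (\prod_(q <- S) monomial_derivn (k q) (b q) (h q)) / Num.sqrt (mfact b)%:R
  else 0.

Definition Sderiv k h : X := fam_sum (fun b => dcoef k h b *: u b).

Definition dconst (k : nat * nat -> nat) : R :=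
  \prod_(q <- S) ((k q)`!%:R * (2 / r) ^+ k q).

Definition incr (k : nat * nat -> nat) p n q : nat :=
  if q == p then (k q + n)%N else k q.

Definition hshift (h : nat * nat -> R) p (t : R) q : R :=
  h q + (if q == p then t else 0).

Definition in_box (h : nat * nat -> R) : Prop :=
  (forall q, q \notin S -> h q = 0) /\ (forall q, `|h q| < r / 32).

Variable M : R.
Hypothesis majorant_le : sums_le majorant M.

Lemma dconst_ge0 k : 0 <= dconst k.
Proof.
by apply: prodr_ge0 => q _; rewrite mulr_ge0 ?ler0n // exprn_ge0 // divr_ge0 // ltW.
Qed.

Lemma dcoef_bound k h b : (forall q, `|h q| <= r / 2) ->
  `|dcoef k h b *: u b| <= dconst k * majorant b.
Proof.
move=> h_small; rewrite /dcoef /majorant; case: ifP => _; last first.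
  by rewrite scale0r normr0 mulr0.
rewrite normrZ normrM normfV (ger0_norm (sqrtr_ge0 _)) mulrAC !mulrA.
rewrite ler_wpM2r ?invr_ge0 ?sqrtr_ge0 // ler_wpM2r // /dconst -big_split /=.
rewrite normr_prod ler_prod // => q _.
by rewrite normr_ge0 monomial_derivn_bound.
Qed.

Lemma Sderiv_cvg k h : (forall q, `|h q| <= r / 2) ->
  partial_sum (fun b => dcoef k h b *: u b) @ totally --> Sderiv k h.
Proof.
move=> h_small; exact: partial_sum_cvg_dominated (fun b => dcoef_bound k b h_small)
  (sums_leZ (dconst_ge0 k) majorant_le).
Qed.

Lemma dcoef_taylor2 k p h t b : p \in S ->
  (forall q, `|h q| <= r / 16) -> `|t| <= r / 16 ->
  `|(dcoef k (hshift h p t) b - dcoef k h b - t * dcoef (incr k p 1) h b) *: u b|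
    <= t ^+ 2 * (16 / r) ^+ 2 * dconst k * majorant b.
Proof.
move=> pS h_small t_small; rewrite /dcoef /majorant; case: ifP => _; last first.
  by rewrite subrr mulr0 subr0 scale0r normr0 mulr0.
pose md q := monomial_derivn (k q) (b q) (h q).
pose Cq q := (k q)`!%:R * (2 / r) ^+ k q * r ^+ b q.
have [-> -> ->] : [/\ \prod_(q <- S) monomial_derivn (k q) (b q) (hshift h p t q)
      = monomial_derivn (k p) (b p) (h p + t) * \prod_(q <- S | q != p) md q,
    \prod_(q <- S) md q = md p * \prod_(q <- S | q != p) md q &
    \prod_(q <- S) monomial_derivn (incr k p 1 q) (b q) (h q)
      = monomial_derivn (k p).+1 (b p) (h p) * \prod_(q <- S | q != p) md q].
  rewrite !(bigD1_seq p) //= /hshift /incr eqxx addn1; split=> //;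
    by congr (_ * _); apply: eq_bigr => q /negbTE ->; rewrite ?addr0.
have Cq_split : dconst k * \prod_(q <- S) r ^+ b q
    = Cq p * \prod_(q <- S | q != p) Cq q.
  by rewrite /dconst -big_split /= (bigD1_seq p).
set P := \prod_(q <- S | q != p) md q; set s := Num.sqrt _.
have P_le : `|P| <= \prod_(q <- S | q != p) Cq q.
  rewrite normr_prod ler_prod // => q _.
  rewrite normr_ge0 /=; apply: monomial_derivn_bound => //.
  by have := h_small q; have := r_gt0; lra.
have rem_le := monomial_derivn_taylor2 (k p) (b p) r_gt0 (h_small p) t_small.
set rem := monomial_derivn (k p) (b p) (h p + t) - md p
  - t * monomial_derivn (k p).+1 (b p) (h p).
have -> : monomial_derivn (k p) (b p) (h p + t) * P / s - md p * P / s
    - t * (monomial_derivn (k p).+1 (b p) (h p) * P / s) = rem * P / s.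
  by rewrite /rem; ring.
set c := t ^+ 2 * (16 / r) ^+ 2 in rem_le *.
rewrite normrZ !normrM normfV (ger0_norm (sqrtr_ge0 _)) !mulrA [_ / s * _]mulrAC.
rewrite ler_wpM2r ?invr_ge0 ?sqrtr_ge0 // ler_wpM2r // -mulrA Cq_split mulrA.
exact: ler_pM.
Qed.

Lemma Sderiv_taylor2 k p h t : p \in S ->
  (forall q, `|h q| <= r / 16) -> `|t| <= r / 16 ->
  `|Sderiv k (hshift h p t) - Sderiv k h - t *: Sderiv (incr k p 1) h|
    <= t ^+ 2 * ((16 / r) ^+ 2 * dconst k * M).
Proof.
move=> pS h_small t_small.
have le_half g : (forall q, `|g q| <= r / 16) -> forall q, `|g q| <= r / 2.
  by move=> g_small q; have := g_small q; have := r_gt0; lra.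
have ht_half : forall q, `|hshift h p t q| <= r / 2.
  move=> q; rewrite /hshift; apply: le_trans (ler_normD _ _) _.
  by have := h_small q; case: eqP; rewrite ?normr0 => _; have := r_gt0; lra.
have c_ge0 : 0 <= t ^+ 2 * (16 / r) ^+ 2 * dconst k.
  by rewrite mulr_ge0 ?dconst_ge0 // mulr_ge0 ?sqr_ge0.
apply: le_trans (norm_partial_sum_lim_le
  (fun b => dcoef_taylor2 k b pS h_small t_small) (sums_leZ c_ge0 majorant_le) _) _.
- have -> : (fun b => (dcoef k (hshift h p t) b - dcoef k h b
        - t * dcoef (incr k p 1) h b) *: u b)
      = (fun b => dcoef k (hshift h p t) b *: u b - dcoef k h b *: u b
        - t *: (dcoef (incr k p 1) h b *: u b)).
    by apply/funext => b; rewrite !scalerBl scalerA.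
  rewrite !partial_sumB partial_sumZ.
  by apply: cvgB; [apply: cvgB | apply: cvgZr]; apply: Sderiv_cvg => //; exact: le_half.
- (* Without [set], [-!mulrA] would also unfold the square. *)
  by set c := (16 / r) ^+ 2; rewrite -!mulrA.
Qed.

Lemma dpartial_Sderiv k p F : p \in S ->
  (forall h, in_box h -> F h = Sderiv k h) ->
  forall h, in_box h -> dpartial p F h = Sderiv (incr k p 1) h.
Proof.
move=> pS FT h [h_supp h_lt]; have r_ge0 := ltW r_gt0.
have d_gt0 : 0 < r / 32 - `|h p| by have := h_lt p; lra.
have shift_in_box t : `|t| < r / 32 - `|h p| -> in_box (hshift h p t).
  move=> td; split => q.
    by move=> qS; rewrite /hshift ifN ?addr0 ?h_supp //; apply: contraNneq qS => ->.
  rewrite /hshift; case: eqP => [->|_]; last by rewrite addr0.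
  by apply: le_lt_trans (ler_normD _ _) _; lra.
have hshift0 : hshift h p 0 = h by apply/funext => q; rewrite /hshift if_same addr0.
apply: (derive1_quadratic_remainder (K := (16 / r) ^+ 2 * dconst k * M) d_gt0).
move=> t _ td.
change (`|F (hshift h p t) - F (hshift h p 0) - t *: Sderiv (incr k p 1) h|
  <= t ^+ 2 * ((16 / r) ^+ 2 * dconst k * M)).
have [in_box_t in_box_0] : in_box (hshift h p t) /\ in_box (hshift h p 0).
  by split; apply: shift_in_box; rewrite ?normr0.
have h16 q : `|h q| <= r / 16 by have := h_lt q; lra.
have t16 : `|t| <= r / 16 by have := h_lt p; have := normr_ge0 (h p); lra.
by rewrite !FT // hshift0 Sderiv_taylor2.
Qed.

Lemma Sderiv_ext k k' : k =1 k' -> Sderiv k = Sderiv k'.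
Proof. by move/funext ->. Qed.

Lemma iter_dpartial_Sderiv k p n F : p \in S ->
  (forall h, in_box h -> F h = Sderiv k h) ->
  forall h, in_box h -> iter n (dpartial p) F h = Sderiv (incr k p n) h.
Proof.
move=> pS FT; elim: n => [|n IH] h h_small.
  by rewrite /= FT // (Sderiv_ext (k' := incr k p 0)) // => q; rewrite /incr addn0 if_same.
rewrite iterS (dpartial_Sderiv pS IH h_small) (Sderiv_ext (k' := incr k p n.+1)) // => q.
by rewrite /incr; case: eqP => // _; rewrite addn1 addnS.
Qed.

Lemma foldr_dpartial_Sderiv (a : nat * nat -> nat) l F :
  {subset l <= S} -> uniq l ->
  (forall h, in_box h -> F h = Sderiv (fun _ => 0%N) h) ->
  forall h, in_box h -> foldr (fun p G => iter (a p) (dpartial p) G) F l h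
    = Sderiv (fun q => if q \in l then a q else 0%N) h.
Proof.
move=> + + F0; elim: l => [_ _ h /F0 //|p l IH lS /= /andP[pl l_uniq] h h_small].
have lS' : {subset l <= S} by move=> q ql; apply: lS; rewrite inE ql orbT.
rewrite (iter_dpartial_Sderiv _ (lS p (mem_head p l)) (IH lS' l_uniq)) //.
rewrite (Sderiv_ext (k' := fun q => if q \in p :: l then a q else 0%N)) // => q.
by rewrite /incr inE; case: eqP => [->|_] //=; rewrite (negbTE pl).
Qed.

Lemma Strans_Sderiv0 h : (forall q, q \notin S -> h q = 0) ->
  Strans u h = Sderiv (fun _ => 0%N) h.
Proof.
move=> h_supp; congr fam_sum; apply/funext => b; congr (_ *: _).
rewrite /dcoef /hpow; case: ifP => b_supp.
  rewrite (big_prod_supported_in S_uniq b_supp) => [|q].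
    by congr (_ / _); apply: eq_bigr => q _; rewrite /monomial_derivn ffactn0 mul1r subn0.
  by rewrite memNfinsupp => /eqP ->; rewrite /monomial_derivn ffactn0 mul1r expr0.
have [q qb qS] : exists2 q, q \in finsupp b & q \notin S.
  by apply/allPn; rewrite -/(supported_in S b) b_supp.
rewrite (bigD1_seq q) ?fset_uniq //= h_supp // expr0n.
by move: qb; rewrite mem_finsupp => /negbTE ->; rewrite !mul0r.
Qed.

(* At [h = 0] every monomial but [h ^ a] has a vanishing [a]-th derivative. *)
Lemma Sderiv_at0 (a : mindex) : S = finsupp a ->
  Sderiv a (fun _ => 0) = Num.sqrt (mfact a)%:R *: u a.
Proof.
move=> S_a; have a_supp : supported_in S a by apply/allP => q; rewrite S_a.
have -> : Num.sqrt (mfact a)%:R = dcoef a (fun _ => 0) a :> R.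
  rewrite /dcoef a_supp /mfact natr_prod -S_a.
  have -> : \prod_(q <- S) monomial_derivn (a q) (a q) 0 = \prod_(q <- S) (a q)`!%:R :> R.
    by apply: eq_bigr => q _; rewrite /monomial_derivn ffactnn subnn expr0 mulr1.
  have P_gt0 : (0 : R) < \prod_(q <- S) (a q)`!%:R.
    by apply: prodr_gt0 => q _; rewrite ltr0n fact_gt0.
  by rewrite -{2}(sqr_sqrtr (ltW P_gt0)) expr2 mulfK // gt_eqF // sqrtr_gt0.
apply: cvg_lim; first exact: norm_hausdorff.
apply: partial_sum_cvg1 => b ba; rewrite /dcoef.
case: ifP => [b_supp|]; last by rewrite scale0r.
have [q bq] : exists q, b q != a q.
  have : ~ (forall q, b q = a q).
    by move=> b_eq; move: ba; rewrite (_ : b = a) ?eqxx //; apply/fsfunP.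
  by move/existsNP => [q /eqP bq]; exists q.
have qS : q \in S.
  rewrite S_a mem_finsupp; apply: contra bq => /eqP aq0.
  rewrite aq0 -memNfinsupp; apply: contraL b_supp => qb; apply/negP => /allP /(_ q qb).
  by rewrite S_a mem_finsupp aq0 eqxx.
rewrite (bigD1_seq q) //= /monomial_derivn.
case: (ltngtP (b q) (a q)) => [lt|gt|eq]; last by rewrite eq eqxx in bq.
  by rewrite ffact_small // !mul0r scale0r.
by rewrite expr0n subn_eq0 leqNgt gt /= !(mulr0, mul0r) scale0r.
Qed.

Lemma Dalpha_Strans_at0 (a : mindex) : S = finsupp a ->
  Dalpha a (Strans u) (fun _ => 0) = Num.sqrt (mfact a)%:R *: u a.
Proof.
move=> S_a; have in_box0 : in_box (fun _ => 0) by split=> // q; rewrite normr0 divr_gt0.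
rewrite /Dalpha -S_a (foldr_dpartial_Sderiv _ _ S_uniq _ in_box0) //; last first.
  by move=> h [h_supp _]; exact: Strans_Sderiv0.
rewrite -Sderiv_at0 // (Sderiv_ext (k' := a)) // => q.
by case: ifP => //; rewrite S_a => /negbT; rewrite memNfinsupp => /eqP ->.
Qed.

End FormalDerivatives.

Lemma exists_pos_lower_bound (T : eqType) (R : realFieldType) (s : seq T) (f : T -> R) :
  {in s, forall p, 0 < f p} -> exists2 r, 0 < r <= 1 & {in s, forall p, r <= f p}.
Proof.
move=> f_gt0; exists (\big[Num.min/1]_(p <- s | p \in s) f p).
  by rewrite lt_bigmin ?ltr01 // bigmin_le_id.
by move=> p ps; rewrite ge_bigmin_seq.
Qed.

Lemma mulr_le_amgm (R : realFieldType) (w y z : R) : 0 < w ->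
  y * z <= (w * z ^+ 2 + y ^+ 2 / w) / 2.
Proof.
move=> w_gt0; have : y ^+ 2 / w * w = y ^+ 2 by rewrite mulfVK ?gt_eqF.
have := sqr_ge0 (w * z - y); set v := y ^+ 2 / w; nra.
Qed.

Section MajorantBound.
Variables (R : realType) (X : completeNormedModType R) (u : mindex -> X).
Variable S : seq (nat * nat).
Hypothesis S_uniq : uniq S.

(* A weighted square summability bound [w b >= f ^ b / b!] yields a summable
   majorant by AM-GM, once [r ^ 2 <= f / 2] makes the remainder geometric. *)
Lemma sums_le_majorant (w : mindex -> R) (f : nat * nat -> R) M :
  (forall b, 0 < w b) -> sums_le (fun b => w b * `|u b| ^+ 2) M ->
  {in S, forall p, 0 < f p} ->
  (forall b, supported_in S b -> \prod_(p <- S) f p ^+ b p <= (mfact b)%:R * w b) ->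
  exists2 r, 0 < r & exists M', sums_le (majorant u S r) M'.
Proof.
move=> w_gt0 wM f_gt0 f_le.
have [r /andP[r_gt0 r_le1] r_le] :
    exists2 r : R, 0 < r <= 1 & {in S, forall p, r <= f p / 2}.
  by apply: exists_pos_lower_bound => p /f_gt0 fp; rewrite divr_gt0.
exists r => //; exists (M / 2 + 2 ^+ size S / 2) => A.
pose geom b : R := \prod_(p <- S) (2^-1 : R) ^+ b p.
have majorant_le b : majorant u S r b
    <= w b * `|u b| ^+ 2 / 2 + (if supported_in S b then geom b else 0) / 2.
  rewrite /majorant; case: ifP => b_supp; last first.
    by rewrite mul0r addr0 !mulr_ge0 ?invr_ge0 ?sqr_ge0 // ltW.
  set W := \prod_(q <- S) r ^+ b q; set s := Num.sqrt _.
  have fact_gt0 : (0 : R) < (mfact b)%:R by rewrite ltr0n mfact_gt0.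
  have s2 : s ^+ 2 = (mfact b)%:R by rewrite sqr_sqrtr // ltW.
  have prodf_gt0 : 0 < \prod_(p <- S) f p ^+ b p.
    by rewrite big_seq prodr_gt0 // => p /f_gt0 fp; rewrite exprn_gt0.
  have ratio_le : (W / s) ^+ 2 / w b <= geom b.
    rewrite expr_div_n s2 -mulrA -invfM.
    apply: le_trans (_ : W ^+ 2 / \prod_(p <- S) f p ^+ b p <= _).
      by rewrite ler_wpM2l ?sqr_ge0 // lef_pV2 ?posrE ?mulr_gt0 ?f_le.
    rewrite /W /geom -prodrXl -prodf_div big_seq [X in _ <= X]big_seq ler_prod // => p pS.
    have fp := f_gt0 p pS.
    have rf_ge0 : 0 <= r ^+ 2 / f p by rewrite divr_ge0 ?sqr_ge0 ?ltW.
    rewrite -exprM mulnC exprM -expr_div_n exprn_ge0 //=.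
    apply: lerXn2r; rewrite ?nnegrE ?invr_ge0 //.
    rewrite ler_pdivrMr // expr2; have := r_le p pS; nra.
  rewrite mulrAC; apply: le_trans (mulr_le_amgm _ _ (w_gt0 b)) _.
  by rewrite mulrDl lerD2l ler_wpM2r ?invr_ge0.
apply: le_trans (ler_sum _ (fun b _ => majorant_le b)) _.
rewrite big_split /= -!mulr_suml -big_mkcond lerD ?ler_wpM2r ?invr_ge0 //.
exact: sum_supported_in_geometric.
Qed.

Lemma majorant_bounded_L2Q (q : nat -> R) : (forall k, 0 < q k) -> in_L2Q q u ->
  exists2 r, 0 < r & exists M, sums_le (majorant u S r) M.
Proof.
move=> q_gt0 u_L2Q.
have [M wM] := esum_lt_pinfty_sums_le (fun b => mulr_ge0 (sqr_ge0 _) (sqr_ge0 _)) u_L2Q.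
apply: (sums_le_majorant (f := fun p => q p.2 ^+ 2) _ wM) => [b|p _|b b_supp].
- by rewrite exprn_gt0 // prodr_gt0 // => p _; rewrite exprn_gt0.
- by rewrite exprn_gt0.
rewrite /qpow -prodrXl (big_prod_supported_in S_uniq b_supp) => [|p].
  rewrite [X in _ <= _ * X](eq_bigr _ (fun p _ => exprAC _ _ _)).
  rewrite ler_peMl ?ler1n ?mfact_gt0 //.
  by rewrite prodr_ge0 // => p _; rewrite exprn_ge0 ?sqr_ge0.
by rewrite memNfinsupp => /eqP ->.
Qed.

Lemma majorant_bounded_S (rho gamma : R) : 0 <= rho <= 1 -> 0 <= gamma ->
  in_S rho gamma u -> exists2 r, 0 < r & exists M, sums_le (majorant u S r) M.
Proof.
move=> /andP[_ rho_le1] _ u_S.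
have fact_ge1 b : (1 : R) <= (mfact b)%:R by rewrite ler1n mfact_gt0.
have w_gt0 b : 0 < (mfact b)%:R `^ (- rho) * Sweight gamma b.
  apply: mulr_gt0; first by rewrite powR_gt0 // (lt_le_trans ltr01).
  by rewrite /Sweight prodr_gt0 // => p _; rewrite exprn_gt0 // powR_gt0.
have [M wM] := esum_lt_pinfty_sums_le (fun b => mulr_ge0 (ltW (w_gt0 b)) (sqr_ge0 _)) u_S.
apply: (sums_le_majorant _ wM (f := fun p => (2 * p.1.+1 * p.2.+1)%:R `^ (- gamma)))
  => [//|p _|b b_supp]; first by rewrite powR_gt0.
rewrite /Sweight -(big_prod_supported_in S_uniq b_supp) => [|p]; last first.
  by rewrite memNfinsupp => /eqP ->.
rewrite mulrA; apply: ler_peMl.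
  by rewrite prodr_ge0 // => p _; rewrite exprn_ge0 // powR_ge0.
have fact_gt0 : (0 : R) < (mfact b)%:R by rewrite ltr0n mfact_gt0.
have : (mfact b)%:R `^ (-1) <= (mfact b)%:R `^ (- rho) :> R by rewrite ler_powR // lerN2.
rewrite powR_inv1 ?(ltW fact_gt0) // => inv_le.
by rewrite -[X in X <= _](mulfV (lt0r_neq0 fact_gt0)) ler_wpM2l // ltW.
Qed.

Lemma majorant_bounded :
  ((exists q : nat -> R, (forall k, 0 < q k) /\ in_L2Q q u) \/
   (exists rho : R, 0 <= rho <= 1 /\
      exists gamma : R, 0 <= gamma /\ in_S rho gamma u)) ->
  exists2 r, 0 < r & exists M, sums_le (majorant u S r) M.
Proof.
case=> [[q [q_gt0 u_L2Q]]|[rho [rho01 [gamma [gamma_ge0 u_S]]]]].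
  exact: majorant_bounded_L2Q u_L2Q.
exact: majorant_bounded_S u_S.
Qed.

End MajorantBound.

Theorem proposition7p12 (R : realType) (X : completeNormedModType R)
  (u : mindex -> X) :
  ((exists q : nat -> R, (forall k, 0 < q k) /\ in_L2Q q u) \/
   (exists rho : R, 0 <= rho <= 1 /\
      exists gamma : R, 0 <= gamma /\ in_S rho gamma u)) ->
  forall a : mindex,
    u a = (Num.sqrt ((mfact a)%:R))^-1 *: Dalpha a (Strans u) (fun _ => 0).
Proof.
move=> hyp a; have a_uniq := fset_uniq (finsupp a).
have [r r_gt0 [M majorant_le]] := majorant_bounded a_uniq hyp.
rewrite (Dalpha_Strans_at0 a_uniq r_gt0 majorant_le erefl) scalerA mulVf ?scale1r //.
by rewrite gt_eqF // sqrtr_gt0 ltr0n mfact_gt0.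
Qed.
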